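(* Let $T$ be a rooted tree whose vertices are identified with their preorder labels, and let $u_1,\dots,u_k,v_1,\dots,v_k$ be vertices of $T$ with $u_i\le v_i$ for all $i$. Then $$\mathrm{LCA}(\mathrm{LCA}(u_1,v_1),\mathrm{LCA}(u_2,v_2),\dots,\mathrm{LCA}(u_k,v_k))=\mathrm{LCA}(\min_i u_i,\max_i v_i).$$
   Context: A preorder labeling of $T$: the root receives label $1$; whenever a vertex receives label $\ell$, its children are ordered arbitrarily as $c_1,\dots,c_k$ and child $c_i$ receives label $\ell+1+\sum_{j<i}\#\mathrm{desc}(c_j)$, where $\#\mathrm{desc}(c)$ is the number of descendants of $c$ (including $c$). Vertices are identified with their labels, and $\le$, $\min$, $\max$ refer to labels. Every vertex is an ancestor of itself. $\mathrm{LCA}(w_1,w_2,\dots)$ denotes the lowest common ancestor in $T$: a common ancestor of all $w_i$ such that no strict descendant of it is a common ancestor of all $w_i$. *)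

(* A rooted tree with vertex set {1,...,n} (vertices = their
   labels), root 1, given by a parent function [par] (par 1 is irrelevant). *)
From mathcomp Require Import all_boot.
Set Implicit Arguments. Unset Strict Implicit. Unset Printing Implicit Defensive.

(* [par] describes a rooted tree on {1..n} with root 1: every non-root vertex
   has its parent in {1..n}, and iterating the parent map reaches the root
   (hence there are no cycles). *)
Definition is_rooted_tree (n : nat) (par : nat -> nat) : Prop :=
  1 <= n /\
  forall v, 2 <= v <= n -> 1 <= par v <= n /\ exists k, iter k par v = 1.

Definition is_vertex (n v : nat) : bool := (1 <= v <= n).

(* a is an ancestor of v (reflexive): a is reached by walking up from v,
   stopping at the root. In a tree on n vertices a path to the root has
   fewer than n steps, so the bound k <= n loses nothing. *)
Definition anc (n : nat) (par : nat -> nat) (a v : nat) : bool :=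
  [exists k : 'I_n.+1, (iter k par v == a) &&
     [forall j : 'I_n.+1, (j < k) ==> (iter j par v != 1)]].

Definition ndesc (n : nat) (par : nat -> nat) (c : nat) : nat :=
  #|[set w : 'I_n.+1 | is_vertex n w && anc n par c w]|.

Definition children (n : nat) (par : nat -> nat) (l : nat) : seq nat :=
  [seq c <- iota 2 n.-1 | par c == l].

Definition is_preorder_labeling (n : nat) (par : nat -> nat) : Prop :=
  forall l, is_vertex n l ->
    exists s : seq nat, perm_eq s (children n par l) /\
      forall i, i < size s ->
        nth 0 s i = l + 1 + \sum_(j < i) ndesc n par (nth 0 s j).

Definition is_lca (n : nat) (par : nat -> nat) (ws : seq nat) (x : nat) : Prop :=
  is_vertex n x /\ all (anc n par x) ws /\
  forall y, is_vertex n y -> y != x -> anc n par x y -> ~~ all (anc n par y) ws.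

From mathcomp Require Import all_boot all_order zify.
Set Implicit Arguments. Unset Strict Implicit.

(* In a preorder labeling the descendants of a vertex a carry exactly the labels
   a, ..., a + #desc(a) - 1.  So a is a common ancestor of all the u_i and v_i
   iff this interval contains them all, iff (as u_i <= v_i) it contains
   min u_i and max v_i.  Since the ancestors of a vertex form a chain, the
   common ancestors of u_i and v_i are exactly the ancestors of
   LCA(u_i, v_i).  Both sides thus have the same common ancestors, hence the
   same lowest one, which is unique. *)

(* [anc] without its bound k <= n on the number of steps; [ancP] shows that
   for vertices the bound loses nothing. *)
Definition ancestor (par : nat -> nat) (a w : nat) : Prop :=
  exists2 k, iter k par w = a & forall j, j < k -> iter j par w != 1.

Lemma ancestor_refl par a : ancestor par a a.
Proof. by exists 0. Qed.

Lemma ancestor_trans par a b c :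
  ancestor par a b -> ancestor par b c -> ancestor par a c.
Proof.
move=> [k1 E1 H1] [k2 E2 H2]; exists (k1 + k2); first by rewrite iterD E2.
move=> j hj; case: (ltnP j k2) => hjk2; first exact: H2.
by rewrite -(subnK hjk2) iterD E2; apply: H1; lia.
Qed.

Lemma ancestor_total par a b w :
  ancestor par a w -> ancestor par b w -> ancestor par a b \/ ancestor par b a.
Proof.
move=> [ka Ea Ha] [kb Eb Hb]; case: (leqP ka kb) => hk.
  right; exists (kb - ka); first by rewrite -Ea -iterD subnK.
  by move=> j hj; rewrite -Ea -iterD; apply: Hb; lia.
left; exists (ka - kb); first by rewrite -Eb -iterD subnK // ltnW.
by move=> j hj; rewrite -Eb -iterD; apply: Ha; lia.
Qed.

Lemma ancestor_par par c : c != 1 -> ancestor par (par c) c.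
Proof. by move=> c1; exists 1 => // -[]. Qed.

Section RootedTree.

Variables (n : nat) (par : nat -> nat).
Hypothesis tree : is_rooted_tree n par.

Lemma iter_vertex w k : is_vertex n w ->
  (forall j, j < k -> iter j par w != 1) -> is_vertex n (iter k par w).
Proof.
case: tree => _ tree_par wn; elim: k => [|k IHk] //= not_root.
have /IHk : forall j, j < k -> iter j par w != 1 by move=> j hj; apply/not_root/ltnW.
have := not_root k (ltnSn k); rewrite /is_vertex => k1 kn.
by have /tree_par[] : 2 <= iter k par w <= n by lia.
Qed.

Lemma reach_root w : is_vertex n w -> exists k, iter k par w = 1.
Proof.
case: tree => _ tree_par wn; case: (eqVneq w 1) => [->|w1]; first by exists 0.
by have /tree_par[_] : 2 <= w <= n by move: wn; rewrite /is_vertex; lia.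
Qed.

(* Before the first visit of the root the walk up from w cannot repeat a
   vertex: a repetition would shortcut the walk and reach the root earlier.
   So it visits distinct vertices of {2, ..., n}. *)
Lemma ancestor_steps_lt w k : is_vertex n w ->
  (forall j, j < k -> iter j par w != 1) -> k < n.
Proof.
move=> wn not_root.
have reach : exists K, iter K par w == 1 by case: (reach_root wn) => K /eqP; exists K.
case: (ex_minnP reach) => K /eqP rootK minK.
have kK : k <= K by rewrite leqNgt; apply/negP => /not_root; rewrite rootK.
have below_root j : j < K -> iter j par w != 1.
  by move=> jK; apply/negP => /minK; lia.
have walk_inj i j : i < j < K -> iter i par w != iter j par w.
  move=> /andP[ij jK]; apply/eqP => Eij.
  have : iter (K - j + i) par w = 1 by rewrite iterD Eij -iterD subnK // ltnW.
  by move/eqP/minK; lia.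
have walk_uniq : uniq [seq iter j par w | j <- iota 0 K].
  rewrite map_inj_in_uniq ?iota_uniq // => i j; rewrite !mem_iota !add0n => iK jK Eij.
  by case: (ltngtP i j) => // [ij|ji]; [have := walk_inj i j | have := walk_inj j i];
     rewrite Eij eqxx; lia.
have walk_sub : {subset [seq iter j par w | j <- iota 0 K] <= iota 2 n.-1}.
  move=> z /mapP[j]; rewrite mem_iota add0n => jK ->; rewrite mem_iota.
  have := iter_vertex wn (fun i iK => below_root i (ltn_trans iK jK)).
  by have := below_root j jK; rewrite /is_vertex; lia.
have := uniq_leq_size walk_uniq walk_sub; rewrite size_map !size_iota.
by case: tree; lia.
Qed.

Lemma ancP a w : is_vertex n w -> reflect (ancestor par a w) (anc n par a w).
Proof.
move=> wn; apply: (iffP existsP) => [[k /andP[/eqP Ek /forallP below]]|[k Ek below]].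
  exists k => // j jk.
  by have := below (Ordinal (ltn_trans jk (ltn_ord k))); rewrite /= jk.
have kn : k < n.+1 by have := ancestor_steps_lt wn below; lia.
exists (Ordinal kn); rewrite /= Ek eqxx /=.
by apply/forallP => j; apply/implyP/below.
Qed.

Lemma ancestor_vertex a w : is_vertex n w -> ancestor par a w -> is_vertex n a.
Proof. by move=> wn [k <-]; apply: iter_vertex. Qed.

Lemma anc_refl a : is_vertex n a -> anc n par a a.
Proof. by move=> an; apply/ancP/ancestor_refl. Qed.

Lemma anc_trans a b c : is_vertex n c ->
  anc n par a b -> anc n par b c -> anc n par a c.
Proof.
move=> cn ab /(ancP _ cn) bc; have bn := ancestor_vertex cn bc.
by apply/(ancP _ cn)/(ancestor_trans (ancP _ bn ab) bc).
Qed.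

Lemma anc_total a b w : is_vertex n w ->
  anc n par a w -> anc n par b w -> anc n par a b || anc n par b a.
Proof.
move=> wn /(ancP _ wn) aw /(ancP _ wn) bw.
have an := ancestor_vertex wn aw; have bn := ancestor_vertex wn bw.
by case: (ancestor_total aw bw) => [/(ancP _ bn)->|/(ancP _ an)->]; rewrite ?orbT.
Qed.

Lemma mem_children a c :
  (c \in children n par a) = [&& par c == a, is_vertex n c & c != 1].
Proof.
rewrite mem_filter mem_iota /is_vertex; case: tree => n1 _.
by case: (par c == a) => //=; apply/idP/idP; lia.
Qed.

Lemma anc_child a w : is_vertex n w -> anc n par a w -> w != a ->
  exists2 c, c \in children n par a & anc n par c w.
Proof.
move=> wn /(ancP _ wn)[[|k] Ek below] wa; first by rewrite -Ek eqxx in wa.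
have below_k j : j < k -> iter j par w != 1 by move=> jk; apply/below/ltnW.
exists (iter k par w); last by apply/(ancP _ wn); exists k.
rewrite mem_children -iterS Ek eqxx iter_vertex //=.
exact: below.
Qed.

Lemma children_anc a c : c \in children n par a -> anc n par a c.
Proof.
rewrite mem_children => /and3P[/eqP <- cn c1].
exact/(ancP _ cn)/ancestor_par.
Qed.

End RootedTree.

Definition subtree (n : nat) (par : nat -> nat) (a : nat) : {set 'I_n.+1} :=
  [set w : 'I_n.+1 | is_vertex n w && anc n par a w].

Lemma ndescE n par a : ndesc n par a = #|subtree n par a|.
Proof. by []. Qed.

Definition child_label (n : nat) (par : nat -> nat) (a : nat) (s : seq nat) (i : nat) :=
  a + 1 + \sum_(j < i) ndesc n par (nth 0 s j).

Section PreorderLabeling.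

Variables (n : nat) (par : nat -> nat).
Hypothesis tree : is_rooted_tree n par.
Hypothesis preorder : is_preorder_labeling n par.

Definition subtree_in_interval (a : nat) : Prop :=
  forall w, is_vertex n w -> anc n par a w -> a <= w < a + ndesc n par a.

Lemma vertex_ord a : is_vertex n a -> a < n.+1.
Proof. by rewrite /is_vertex; lia. Qed.

Lemma mem_subtree_root a (an : is_vertex n a) :
  Ordinal (vertex_ord an) \in subtree n par a.
Proof. by rewrite inE an anc_refl. Qed.

Lemma ndesc_gt0 a : is_vertex n a -> 0 < ndesc n par a.
Proof.
by move=> an; apply/card_gt0P; exists (Ordinal (vertex_ord an)); apply: mem_subtree_root.
Qed.

Lemma children_gt a c : is_vertex n a -> c \in children n par a -> a < c.
Proof.
move=> an; have [s [perm_s label_s]] := preorder an.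
rewrite -(perm_mem perm_s) => cs; have i_lt : index c s < size s by rewrite index_mem.
by have := label_s _ i_lt; rewrite nth_index //; lia.
Qed.

Section ChildOrdering.

Variables (a : nat) (s : seq nat).
Hypothesis an : is_vertex n a.
Hypothesis s_children : {subset s <= children n par a}.
Hypothesis s_label : forall i, i < size s -> nth 0 s i = child_label n par a s i.
Hypothesis s_interval : forall c, c \in s -> subtree_in_interval c.

Lemma child_labelS i :
  child_label n par a s i.+1 = child_label n par a s i + ndesc n par (nth 0 s i).
Proof. by rewrite /child_label big_ord_recr addnA. Qed.

(* Induction on j: the subtree of the j-th child lies in
   [child_label j, child_label j.+1), past the labels counted so far. *)
Lemma card_subtree_below j : j <= size s ->
  child_label n par a s j <= a + #|[set w in subtree n par a | w < child_label n par a s j]|.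
Proof.
elim: j => [|j IHj] js.
  rewrite /child_label big_ord0 addn0 leq_add2l; apply/card_gt0P.
  by exists (Ordinal (vertex_ord an)); rewrite inE mem_subtree_root /=; lia.
set c := nth 0 s j; have cs : c \in s by apply: mem_nth.
have c_label : c = child_label n par a s j by apply: s_label.
set below := [set w in subtree n par a | w < child_label n par a s j].
have below_sub : below :|: subtree n par c \subset
    [set w in subtree n par a | w < child_label n par a s j.+1].
  apply/subsetP => w; rewrite child_labelS !inE => /orP[/andP[-> wj]|/andP[wn cw]].
    by rewrite ltn_addr.
  have a_c := children_anc tree (s_children cs).
  have := s_interval cs wn cw; rewrite wn (anc_trans tree wn a_c cw).
  by rewrite -/c -c_label; lia.
have below_disj : below :&: subtree n par c = set0.
  apply/setP => w; rewrite !inE; apply/negP => /andP[/andP[_ wj] /andP[wn cw]].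
  by have := s_interval cs wn cw; lia.
have := subset_leq_card below_sub; rewrite cardsU below_disj cards0 subn0.
rewrite -(leq_add2l a) => /(leq_trans _); apply.
by rewrite child_labelS -/c ndescE addnA leq_add2r IHj // ltnW.
Qed.

End ChildOrdering.

Lemma subtree_in_interval_children a : is_vertex n a ->
  (forall c, c \in children n par a -> subtree_in_interval c) -> subtree_in_interval a.
Proof.
move=> an children_interval w wn aw.
have [s [perm_s s_label]] := preorder an.
have s_children : {subset s <= children n par a} by move=> c; rewrite (perm_mem perm_s).
have s_interval c : c \in s -> subtree_in_interval c by move/s_children/children_interval.
case: (eqVneq w a) => [->|wa]; first by have := ndesc_gt0 an; lia.
have [c ac cw] := anc_child tree wn aw wa.
have cs : c \in s by rewrite (perm_mem perm_s).
have i_lt : index c s < size s by rewrite index_mem.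
have := card_subtree_below an s_children s_label s_interval i_lt.
have c_label := s_label _ i_lt; rewrite nth_index // in c_label.
rewrite child_labelS /child_label -c_label nth_index //.
have : #|[set z in subtree n par a | z < c + ndesc n par c]| <= ndesc n par a.
  by apply/subset_leq_card/subsetP => z; rewrite inE => /andP[].
have := children_gt an ac; have := children_interval c ac w wn cw; lia.
Qed.

Lemma subtree_interval a : is_vertex n a -> subtree_in_interval a.
Proof.
have [m] := ubnP (n - a); elim: m a => // m IHm a am an.
apply: subtree_in_interval_children => // c ac.
have cn : is_vertex n c by move: ac; rewrite (mem_children tree) => /and3P[].
by apply: IHm => //; have := children_gt an ac; move: an cn; rewrite /is_vertex; lia.
Qed.

(* The subtree of a consists of exactly ndesc a labels, all in an interval of
   that length, so it fills the interval. *)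
Lemma anc_interval a w : is_vertex n a -> is_vertex n w ->
  anc n par a w = (a <= w < a + ndesc n par a).
Proof.
move=> an wn; apply/idP/idP => [|aw]; first exact: subtree_interval.
set labels := [seq nat_of_ord z | z in subtree n par a].
have labels_uniq : uniq labels by rewrite map_inj_uniq ?enum_uniq //; exact: ord_inj.
have labels_sub : {subset labels <= iota a (ndesc n par a)}.
  move=> z /mapP[z']; rewrite mem_enum inE => /andP[z'n az'] ->.
  by rewrite mem_iota; have := subtree_interval an z'n az'; lia.
have labels_size : size (iota a (ndesc n par a)) <= size labels.
  by rewrite size_iota size_map -cardE.
have [_ labels_eq] := uniq_min_size labels_uniq labels_sub labels_size.
have : w \in labels by rewrite labels_eq mem_iota; lia.
by case/mapP=> z; rewrite mem_enum inE => /andP[_ az] ->.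
Qed.

End PreorderLabeling.

Section LowestCommonAncestor.

Variables (n : nat) (par : nat -> nat).
Hypothesis tree : is_rooted_tree n par.

(* Ancestors of a vertex form a chain, so a common ancestor is comparable with
   the lowest one and, by minimality of the latter, lies above it. *)
Lemma anc_lca ws w x a : w \in ws -> all (is_vertex n) ws ->
  is_lca n par ws x -> is_vertex n a -> anc n par a x = all (anc n par a) ws.
Proof.
move=> ws_w /allP ws_vertex [xn [/allP x_anc x_lowest]] an; apply/idP/allP.
  by move=> ax z zs; apply: anc_trans (ws_vertex z zs) ax (x_anc z zs).
move=> a_anc; case: (eqVneq a x) => [->|ax]; first exact: anc_refl.
have wn := ws_vertex w ws_w.
case/orP: (anc_total tree wn (a_anc w ws_w) (x_anc w ws_w)) => // xa.
by have /negP[] := x_lowest a an ax xa; apply/allP.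
Qed.

Lemma eq_is_lca ws ws' x :
  (forall a, is_vertex n a -> all (anc n par a) ws = all (anc n par a) ws') ->
  is_lca n par ws x -> is_lca n par ws' x.
Proof.
move=> eq_common [xn [x_anc x_lowest]]; split=> //; split; first by rewrite -eq_common.
by move=> y yn yx xy; rewrite -eq_common //; apply: x_lowest.
Qed.

Lemma is_lca_unique ws w y z : w \in ws -> is_vertex n w ->
  is_lca n par ws y -> is_lca n par ws z -> y = z.
Proof.
move=> ws_w wn [yn [/allP y_anc y_lowest]] [zn [/allP z_anc z_lowest]].
case: (eqVneq y z) => // yz; exfalso; have zy : z != y by rewrite eq_sym.
case/orP: (anc_total tree wn (y_anc w ws_w) (z_anc w ws_w)) => [y_z|z_y].
  by have /negP[] := y_lowest z zn zy y_z; apply/allP.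
by have /negP[] := z_lowest y yn yz z_y; apply/allP.
Qed.

End LowestCommonAncestor.

Lemma all_in_interval_bigmin_bigmax k (u v : nat -> nat) lo hi : 0 < k ->
  (forall i, i < k -> u i <= v i) ->
  all (fun i => (lo <= u i < hi) && (lo <= v i < hi)) (iota 0 k) =
  (lo <= \big[minn/u 0]_(i < k) u i < hi) && (lo <= \max_(i < k) v i < hi).
Proof.
move=> k_gt0 uv; apply/allP/andP => [in_interval|[/andP[lo_min _] /andP[_ max_hi]] i].
  have uv_in i : i < k -> (lo <= u i < hi) && (lo <= v i < hi).
    by move=> ik; apply: in_interval; rewrite mem_iota.
  split.
    apply: (big_ind (fun m => lo <= m < hi)) => [|m1 m2|i _]; last 1 first.
    - by case/andP: (uv_in i (ltn_ord i)).
    - by case/andP: (uv_in 0 k_gt0).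
    - by lia.
  have k_card : 0 < #|'I_k| by rewrite card_ord.
  have [i ->] := eq_bigmax (fun i : 'I_k => v i) k_card.
  by case/andP: (uv_in i (ltn_ord i)).
rewrite mem_iota add0n => /andP[_ ik].
have min_le : \big[minn/u 0]_(j < k) u j <= u i.
  by rewrite -minEnat -leEnat; apply: (Order.TotalTheory.bigmin_le _ (Ordinal ik)).
have le_max : v i <= \max_(j < k) v j by apply: (leq_bigmax (Ordinal ik)).
by have := uv i ik; lia.
Qed.

Unset Implicit Arguments.

Theorem corollary5p4 (n : nat) (par : nat -> nat)
    (Htree : is_rooted_tree n par) (Hpre : is_preorder_labeling n par)
    (k : nat) (hk : 0 < k) (u v : nat -> nat)
    (Hu : forall i, i < k -> is_vertex n (u i))
    (Hv : forall i, i < k -> is_vertex n (v i))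
    (Huv : forall i, i < k -> u i <= v i)
    (x : nat -> nat) (Hx : forall i, i < k -> is_lca n par [:: u i; v i] (x i))
    (y : nat) (Hy : is_lca n par [seq x i | i <- iota 0 k] y) :
  is_lca n par [:: \big[minn/u 0]_(i < k) u i; \max_(i < k) v i] y /\
  (forall z, is_lca n par [:: \big[minn/u 0]_(i < k) u i; \max_(i < k) v i] z -> z = y).
Proof.
set lo := \big[minn/u 0]_(i < k) u i; set hi := \max_(i < k) v i.
have vertexE w : is_vertex n w = (1 <= w < n.+1) by rewrite ltnS.
have /andP[lo_n hi_n] : is_vertex n lo && is_vertex n hi.
  rewrite !vertexE -all_in_interval_bigmin_bigmax //.
  by apply/allP => i; rewrite mem_iota -!vertexE => /andP[_ ik]; rewrite Hu ?Hv.
have common a : is_vertex n a ->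
    all (anc n par a) [seq x i | i <- iota 0 k] = all (anc n par a) [:: lo; hi].
  move=> an; rewrite all_map /= andbT !anc_interval // -all_in_interval_bigmin_bigmax //.
  apply: eq_in_all => i; rewrite mem_iota => /andP[_ ik] /=.
  have uv_vertex : all (is_vertex n) [:: u i; v i] by rewrite /= Hu ?Hv.
  by rewrite (anc_lca Htree (mem_head _ _) uv_vertex (Hx i ik) an) /= andbT !anc_interval ?Hu ?Hv.
have y_lca := eq_is_lca common Hy.
split=> // z z_lca; exact: (is_lca_unique Htree (mem_head lo [:: hi]) lo_n z_lca y_lca).
Qed.
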